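(* In the setting of a domain $U\subset\mathbb{R}^n$ with $\mathbb{R}^{>0}U\subset U$ and a smooth positive homogeneous function $h$ of degree $k>1$ on $U$ for which $g_U=-\partial^2h$ restricts to a positive definite metric on $\{h=1\}$, let for $c\in\mathbb{R}$ $$g'_c:=-\partial^2\log(h+c)=\frac1{h+c}g_U+\frac1{(h+c)^2}(dh)^2$$ on $U_c:=\{x\in U\mid h(x)+c>0\}$ if $c\le0$ and $U_c:=\{x\in U\mid h(x)-c(k-1)>0\}$ if $c>0$. Then: (1) $g'_c=\frac1{h+c}\check g+\frac{h-c(k-1)}{kh}\frac1{(h+c)^2}(dh)^2$, where $\check g=g_U-\frac{g_U(\xi,\cdot)^2}{g_U(\xi,\xi)}$ and $\xi=\sum x^i\partial_{x^i}$; (2) $g'_c$ is a Riemannian metric on $U_c$; (3) if $cc'>0$, then $(U_c,g'_c)$ and $(U_{c'},g'_{c'})$ are isometric, an isometry being given by restriction of a suitable scalar multiplication $x\mapsto\lambda x$, $\lambda>0$.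
   Context: $\partial^2$ denotes the real Hessian with respect to the linear coordinates $x^1,\dots,x^n$. It is known (and may be used) that $\check g$ is positive semidefinite with kernel $\mathbb{R}\xi$ and $g_U=\check g-\frac{k-1}{kh}(dh)^2$. *)

(* A point/vector of R^n is represented as a function  nat -> R ;
   only the coordinates 0..n-1 matter (points of U are required to have
   zero coordinates from n on). *)
From Stdlib Require Import Reals Lra Lia Classical ClassicalEpsilon.
Open Scope R_scope.

Definition vec := nat -> R.

Fixpoint fsum (m : nat) (f : nat -> R) : R :=
  match m with O => 0 | S p => fsum p f + f p end.

Definition ebasis (i : nat) : vec := fun j => if Nat.eqb i j then 1 else 0.

Definition vscale (l : R) (x : vec) : vec := fun j => l * x j.

Definition shift (x : vec) (i : nat) (t : R) : vec := fun j => x j + t * ebasis i j.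

Definition has_partial (i : nat) (f : vec -> R) (x : vec) : Prop :=
  exists l, derivable_pt_lim (fun t => f (shift x i t)) 0 l.

(* the partial derivative d f / d x^i at x (chosen classically;
   meaningful where it exists) *)
Definition partial (i : nat) (f : vec -> R) (x : vec) : R :=
  epsilon (inhabits 0) (fun l => derivable_pt_lim (fun t => f (shift x i t)) 0 l).

Definition in_Rn (n : nat) (x : vec) : Prop := forall i, (n <= i)%nat -> x i = 0.

Definition open_in (n : nat) (U : vec -> Prop) : Prop :=
  (forall x, U x -> in_Rn n x) /\
  (forall x, U x -> exists d, 0 < d /\
     forall y, in_Rn n y -> (forall i, (i < n)%nat -> Rabs (y i - x i) < d) -> U y).

Definition connected_in (n : nat) (U : vec -> Prop) : Prop :=
  forall A B : vec -> Prop, open_in n A -> open_in n B ->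
    (forall x, U x -> A x \/ B x) ->
    (exists x, U x /\ A x) -> (exists x, U x /\ B x) ->
    exists x, U x /\ A x /\ B x.

Definition domain (n : nat) (U : vec -> Prop) : Prop :=
  open_in n U /\ connected_in n U /\ exists x, U x.

Definition continuous_on (n : nat) (U : vec -> Prop) (f : vec -> R) : Prop :=
  forall x, U x -> forall eps, 0 < eps -> exists d, 0 < d /\
    forall y, U y -> (forall i, (i < n)%nat -> Rabs (y i - x i) < d) ->
      Rabs (f y - f x) < eps.

Fixpoint Ck (n m : nat) (U : vec -> Prop) (f : vec -> R) : Prop :=
  match m with
  | O => continuous_on n U f
  | S p => continuous_on n U f /\
           (forall i x, (i < n)%nat -> U x -> has_partial i f x) /\
           (forall i, (i < n)%nat -> Ck n p U (partial i f))
  end.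

Definition smooth_on (n : nat) (U : vec -> Prop) (f : vec -> R) : Prop :=
  forall m, Ck n m U f.

Definition hess (f : vec -> R) (x : vec) (i j : nat) : R :=
  partial i (partial j f) x.

Definition bil (n : nat) (A : nat -> nat -> R) (v w : vec) : R :=
  fsum n (fun i => fsum n (fun j => A i j * v i * w j)).

Definition gU (n : nat) (h : vec -> R) (x v w : vec) : R := - bil n (hess h x) v w.

Definition dh (n : nat) (h : vec -> R) (x v : vec) : R :=
  fsum n (fun i => partial i h x * v i).

(* check g = g_U - g_U(xi,.)^2 / g_U(xi,xi), xi_x = x (Euler field) *)
Definition gcheck (n : nat) (h : vec -> R) (x v w : vec) : R :=
  gU n h x v w - gU n h x x v * gU n h x x w / gU n h x x x.

Definition gprime (n : nat) (h : vec -> R) (c : R) (x v w : vec) : R :=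
  - bil n (hess (fun y => ln (h y + c)) x) v w.

Definition Uc (U : vec -> Prop) (h : vec -> R) (k c : R) (x : vec) : Prop :=
  U x /\ (if Rle_dec c 0 then h x + c > 0 else h x - c * (k - 1) > 0).

Definition nonzero_vec (n : nat) (v : vec) : Prop := exists i, (i < n)%nat /\ v i <> 0.

(* g'_c = -d^2 log(h + c) = (h + c)^-1 g_U + (h + c)^-2 dh^2 is a direct Hessian computation.
   Euler's relation for the homogeneous functions h and dh gives dh(xi) = k h and
   g_U(xi, .) = -(k - 1) dh, which turns this into the g_check form (1).  Writing
   v = u + a xi with dh(u) = 0 one finds g_check(v, v) = g_U(u, u), and g_U is positive definite
   on ker dh (rescale to {h = 1}); so g_check is positive semidefinite with kernel R xi, on which
   dh does not vanish.  On U_c both coefficients in (1) are positive, which gives (2).  For (3),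
   x |-> l x with l^k = c'/c multiplies h + c by c'/c while dh and g_U pick up l^(k-1) and
   l^(k-2), and these factors cancel in g'_c. *)

From Stdlib Require Import Reals Lra Lia FunctionalExtensionality ClassicalEpsilon Classical.
Open Scope R_scope.

Lemma fsum_ext m f g : (forall i, (i < m)%nat -> f i = g i) -> fsum m f = fsum m g.
Proof.
  induction m as [|m IH]; simpl; intros H; auto.
  rewrite IH by (intros; apply H; lia). rewrite (H m) by lia. reflexivity.
Qed.

Lemma fsum_plus m f g : fsum m (fun i => f i + g i) = fsum m f + fsum m g.
Proof. induction m as [|m IH]; simpl; [lra|]. rewrite IH; lra. Qed.

Lemma fsum_scal m c f : fsum m (fun i => c * f i) = c * fsum m f.
Proof. induction m as [|m IH]; simpl; [lra|]. rewrite IH; lra. Qed.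

Lemma fsum_scal_r m f c : fsum m (fun i => f i * c) = fsum m f * c.
Proof. rewrite Rmult_comm, <- fsum_scal. apply fsum_ext; intros; ring. Qed.

Lemma fsum_zero m f : (forall i, (i < m)%nat -> f i = 0) -> fsum m f = 0.
Proof.
  induction m as [|m IH]; simpl; intros H; auto.
  rewrite IH by (intros; apply H; lia). rewrite H by lia. ring.
Qed.

Lemma fsum_swap m p F :
  fsum m (fun i => fsum p (fun j => F i j)) = fsum p (fun j => fsum m (fun i => F i j)).
Proof.
  induction m as [|m IH]; simpl.
  - symmetry; apply fsum_zero; auto.
  - rewrite IH, <- fsum_plus; auto.
Qed.

Lemma fsum_Rabs_nonneg m f : 0 <= fsum m (fun j => Rabs (f j)).
Proof. induction m as [|m IH]; simpl; [lra|]. pose proof (Rabs_pos (f m)); lra. Qed.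

Lemma Rabs_le_fsum_Rabs m f i : (i < m)%nat -> Rabs (f i) <= fsum m (fun j => Rabs (f j)).
Proof.
  induction m as [|m IH]; intros Hi; [lia|]. simpl.
  pose proof (fsum_Rabs_nonneg m f). pose proof (Rabs_pos (f m)).
  destruct (Nat.eq_dec i m) as [->|Hne]; [lra|].
  specialize (IH ltac:(lia)); lra.
Qed.

Lemma derivable_pt_lim_translate g s l :
  derivable_pt_lim (fun t => g (s + t)) 0 l -> derivable_pt_lim g s l.
Proof.
  intros H eps Heps. destruct (H eps Heps) as [del Hdel]. exists del. intros t Ht Hl.
  specialize (Hdel t Ht Hl). rewrite Rplus_0_l, Rplus_0_r in Hdel. exact Hdel.
Qed.

Lemma derivable_pt_lim_inv f x l : derivable_pt_lim f x l -> f x <> 0 ->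
  derivable_pt_lim (fun t => / f t) x (- l / (f x) ^ 2).
Proof.
  intros H Hn.
  pose proof (derivable_pt_lim_div (fun _ => 1) f x 0 l (derivable_pt_lim_const 1 x) H Hn) as Hd.
  replace (- l / f x ^ 2) with ((0 * f x - l * 1) / (f x)²) by (unfold Rsqr; field; auto).
  eapply derivable_pt_lim_ext; [|exact Hd]. intros t. unfold div_fct. lra.
Qed.

Lemma derivable_pt_lim_ln_comp f x l : derivable_pt_lim f x l -> 0 < f x ->
  derivable_pt_lim (fun t => ln (f t)) x (l / f x).
Proof.
  intros H Hp. replace (l / f x) with (/ f x * l) by (unfold Rdiv; ring).
  apply (derivable_pt_lim_comp f ln); auto. apply derivable_pt_lim_ln; auto.
Qed.

Lemma MVT_centered g g' T : (forall s, Rabs s <= Rabs T -> derivable_pt_lim g s (g' s)) ->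
  exists s, Rabs s <= Rabs T /\ g T - g 0 = g' s * T.
Proof.
  intros H. destruct (Rtotal_order T 0) as [Hn|[->|Hp]].
  - destruct (MVT_cor2 g g' T 0 Hn) as [c [Hc1 Hc2]].
    { intros c Hc. apply H. rewrite !Rabs_left1 by lra. lra. }
    exists c. split; [rewrite !Rabs_left1 by lra; lra|].
    replace (g T - g 0) with (- (g 0 - g T)) by ring. rewrite Hc1. ring.
  - exists 0. split; [rewrite Rabs_R0; lra | ring].
  - destruct (MVT_cor2 g g' 0 T Hp) as [c [Hc1 Hc2]].
    { intros c Hc. apply H. rewrite !Rabs_right by lra. lra. }
    exists c. split; [rewrite !Rabs_right by lra; lra|]. rewrite Hc1. ring.
Qed.

Definition is_partial (i : nat) (f : vec -> R) (x : vec) (l : R) : Prop :=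
  derivable_pt_lim (fun t => f (shift x i t)) 0 l.

Lemma partial_correct i f x : has_partial i f x -> is_partial i f x (partial i f x).
Proof. intros H. exact (epsilon_spec (inhabits 0) _ H). Qed.

Lemma is_partial_partial i f x l : is_partial i f x l -> has_partial i f x /\ partial i f x = l.
Proof.
  intros H. assert (Hp : has_partial i f x) by (exists l; exact H).
  split; [exact Hp|]. exact (uniqueness_limite _ _ _ _ (partial_correct i f x Hp) H).
Qed.

Lemma shift_shift x i s t : shift (shift x i s) i t = shift x i (s + t).
Proof. apply functional_extensionality; intros j; unfold shift; ring. Qed.

Lemma shift_0 x i : shift x i 0 = x.
Proof. apply functional_extensionality; intros j; unfold shift; ring. Qed.

Lemma shift_comm x i j s t : shift (shift x i s) j t = shift (shift x j t) i s.
Proof. apply functional_extensionality; intros m; unfold shift; ring. Qed.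

Lemma ebasis_neq i j : i <> j -> ebasis i j = 0.
Proof. intros H; unfold ebasis. apply Nat.eqb_neq in H. rewrite H. reflexivity. Qed.

Lemma Rabs_ebasis_le_1 i j : Rabs (ebasis i j) <= 1.
Proof. unfold ebasis; destruct (Nat.eqb i j); [rewrite Rabs_R1|rewrite Rabs_R0]; lra. Qed.

Lemma in_Rn_shift n x i t : in_Rn n x -> (i < n)%nat -> in_Rn n (shift x i t).
Proof. intros H Hi j Hj. unfold shift. rewrite H, ebasis_neq by lia. ring. Qed.

Lemma Rabs_shift_sub_le x i t j : Rabs (shift x i t j - x j) <= Rabs t.
Proof.
  unfold shift. replace (x j + t * ebasis i j - x j) with (t * ebasis i j) by ring.
  rewrite Rabs_mult. pose proof (Rabs_ebasis_le_1 i j).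
  pose proof (Rabs_pos t). pose proof (Rabs_pos (ebasis i j)). nra.
Qed.

Lemma open_in_shift n U x i : open_in n U -> U x -> (i < n)%nat ->
  exists d, 0 < d /\ forall t, Rabs t < d -> U (shift x i t).
Proof.
  intros [HR Hball] Hx Hi. destruct (Hball x Hx) as [d [Hd Hy]]. exists d; split; auto.
  intros t Ht. apply Hy; [apply in_Rn_shift; auto|].
  intros j Hj. pose proof (Rabs_shift_sub_le x i t j); lra.
Qed.

Lemma derivable_pt_lim_along_line i f y s : has_partial i f (shift y i s) ->
  derivable_pt_lim (fun s' => f (shift y i s')) s (partial i f (shift y i s)).
Proof.
  intros H. apply derivable_pt_lim_translate.
  eapply derivable_pt_lim_ext; [|exact (partial_correct _ _ _ H)].
  intros t; simpl. rewrite shift_shift. reflexivity.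
Qed.

Lemma partial_local n V f g x i : open_in n V -> V x -> (i < n)%nat ->
  (forall y, V y -> f y = g y) -> has_partial i f x ->
  has_partial i g x /\ partial i g x = partial i f x.
Proof.
  intros HV Hx Hi E H. apply is_partial_partial.
  destruct (open_in_shift n V x i HV Hx Hi) as [d [Hd Hs]].
  apply (derivable_pt_lim_locally_ext (fun t => f (shift x i t)) _ 0 (- d) d); [lra| |].
  - intros t Ht. apply E, Hs. apply Rabs_def1; lra.
  - exact (partial_correct _ _ _ H).
Qed.

Lemma is_partial_plus i f g x a b :
  is_partial i f x a -> is_partial i g x b -> is_partial i (fun y => f y + g y) x (a + b).
Proof. intros Hf Hg. exact (derivable_pt_lim_plus _ _ 0 a b Hf Hg). Qed.

Lemma is_partial_mult i f g x a b : is_partial i f x a -> is_partial i g x b ->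
  is_partial i (fun y => f y * g y) x (a * g x + f x * b).
Proof.
  intros Hf Hg. pose proof (derivable_pt_lim_mult _ _ 0 a b Hf Hg) as H.
  unfold is_partial. simpl in H. rewrite shift_0 in H. exact H.
Qed.

Lemma is_partial_const i c x : is_partial i (fun _ => c) x 0.
Proof. exact (derivable_pt_lim_const c 0). Qed.

Lemma is_partial_inv i f x a : is_partial i f x a -> f x <> 0 ->
  is_partial i (fun y => / f y) x (- a / (f x) ^ 2).
Proof.
  intros H Hn. pose proof (derivable_pt_lim_inv _ 0 a H) as Hi.
  simpl in Hi. rewrite shift_0 in Hi. exact (Hi Hn).
Qed.

Lemma is_partial_ln i f x a : is_partial i f x a -> 0 < f x ->
  is_partial i (fun y => ln (f y)) x (a / f x).
Proof.
  intros H Hp. pose proof (derivable_pt_lim_ln_comp _ 0 a H) as Hl.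
  simpl in Hl. rewrite shift_0 in Hl. exact (Hl Hp).
Qed.

Definition close (n : nat) (d : R) (y x : vec) : Prop :=
  forall i, (i < n)%nat -> Rabs (y i - x i) < d.

Lemma close_le n d d' y x : d <= d' -> close n d y x -> close n d' y x.
Proof. intros Hd H i Hi. specialize (H i Hi). lra. Qed.

Definition continuous_at2 (op : R -> R -> R) (a0 b0 : R) : Prop :=
  forall eps, 0 < eps -> exists e, 0 < e /\ forall a b,
    Rabs (a - a0) < e -> Rabs (b - b0) < e -> Rabs (op a b - op a0 b0) < eps.

Lemma continuous_at2_plus a0 b0 : continuous_at2 Rplus a0 b0.
Proof.
  intros eps He. exists (eps / 2). split; [lra|]. intros a b Ha Hb.
  replace (a + b - (a0 + b0)) with ((a - a0) + (b - b0)) by ring.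
  pose proof (Rabs_triang (a - a0) (b - b0)). lra.
Qed.

Lemma continuous_at2_mult a0 b0 : continuous_at2 Rmult a0 b0.
Proof.
  intros eps He. set (M := Rabs a0 + Rabs b0 + 1).
  pose proof (Rabs_pos a0). pose proof (Rabs_pos b0).
  assert (HM : 0 < M) by (unfold M; lra).
  exists (Rmin 1 (eps / M)). split; [apply Rmin_pos; [lra|apply Rdiv_lt_0_compat; auto]|].
  intros a b Ha Hb. pose proof (Rmin_l 1 (eps / M)). pose proof (Rmin_r 1 (eps / M)).
  set (e := Rmin 1 (eps / M)) in *.
  assert (HeM : e * M <= eps).
  { apply Rle_trans with (eps / M * M); [apply Rmult_le_compat_r; lra | right; field; lra]. }
  replace (a * b - a0 * b0) with ((a - a0) * (b - b0) + a0 * (b - b0) + b0 * (a - a0)) by ring.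
  pose proof (Rabs_triang ((a - a0) * (b - b0) + a0 * (b - b0)) (b0 * (a - a0))).
  pose proof (Rabs_triang ((a - a0) * (b - b0)) (a0 * (b - b0))).
  rewrite !Rabs_mult in *.
  pose proof (Rabs_pos (a - a0)). pose proof (Rabs_pos (b - b0)).
  assert (Rabs (a - a0) * Rabs (b - b0) <= e * Rabs (b - b0)) by (apply Rmult_le_compat_r; lra).
  assert (Rabs a0 * Rabs (b - b0) <= Rabs a0 * e) by (apply Rmult_le_compat_l; lra).
  assert (Rabs b0 * Rabs (a - a0) <= Rabs b0 * e) by (apply Rmult_le_compat_l; lra).
  assert (e * Rabs (b - b0) < e * 1) by (apply Rmult_lt_compat_l; lra).
  unfold M in HeM. nra.
Qed.

Lemma Rinv_close b0 eps : b0 <> 0 -> 0 < eps -> exists e, 0 < e /\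
  forall b, Rabs (b - b0) < e -> Rabs (/ b - / b0) < eps.
Proof.
  intros Hb He. pose proof (Rabs_pos_lt _ Hb) as Hp.
  set (e := Rmin (Rabs b0 / 2) (eps * (Rabs b0 * Rabs b0) / 2)).
  exists e. split.
  { apply Rmin_pos; [lra|]. apply Rdiv_lt_0_compat; [|lra]. apply Rmult_lt_0_compat; nra. }
  intros b Hbb. pose proof (Rmin_l (Rabs b0 / 2) (eps * (Rabs b0 * Rabs b0) / 2)).
  pose proof (Rmin_r (Rabs b0 / 2) (eps * (Rabs b0 * Rabs b0) / 2)). fold e in H, H0.
  rewrite <- Rabs_Ropp in Hbb. replace (- (b - b0)) with (b0 - b) in Hbb by ring.
  assert (Hb1 : Rabs b0 / 2 < Rabs b) by (pose proof (Rabs_triang_inv b0 b); lra).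
  assert (Hb0 : b <> 0) by (intro; subst; rewrite Rabs_R0 in Hb1; lra).
  replace (/ b - / b0) with ((b0 - b) / (b * b0)) by (field; auto).
  unfold Rdiv. rewrite Rabs_mult, Rabs_inv, Rabs_mult.
  apply Rmult_lt_reg_r with (Rabs b * Rabs b0); [nra|].
  rewrite Rmult_assoc, Rinv_l, Rmult_1_r by nra.
  assert (Rabs b0 * Rabs b0 / 2 <= Rabs b * Rabs b0) by nra.
  nra.
Qed.

Lemma continuous_on_binop n V op f g :
  continuous_on n V f -> continuous_on n V g ->
  (forall x, V x -> continuous_at2 op (f x) (g x)) ->
  continuous_on n V (fun y => op (f y) (g y)).
Proof.
  intros Hf Hg Hop x Hx eps He. destruct (Hop x Hx eps He) as [e [He' Hm]].
  destruct (Hf x Hx e He') as [d1 [Hd1 H1]]. destruct (Hg x Hx e He') as [d2 [Hd2 H2]].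
  exists (Rmin d1 d2); split; [apply Rmin_pos; auto|]. intros y Hy Hc.
  apply Hm; [apply H1 | apply H2]; auto; eapply close_le; try exact Hc;
    [apply Rmin_l | apply Rmin_r].
Qed.

Lemma continuous_on_const n V c : continuous_on n V (fun _ => c).
Proof. intros x Hx eps He. exists 1; split; [lra|]. intros. rewrite Rminus_diag, Rabs_R0; auto. Qed.

Lemma continuous_on_inv n V g : continuous_on n V g -> (forall y, V y -> g y <> 0) ->
  continuous_on n V (fun y => / g y).
Proof.
  intros Hg Hn x Hx eps He. destruct (Rinv_close (g x) eps (Hn x Hx) He) as [e [He' Hm]].
  destruct (Hg x Hx e He') as [d [Hd H]]. exists d; split; auto.
Qed.

Lemma continuous_on_ext n V f g : (forall y, V y -> f y = g y) ->
  continuous_on n V f -> continuous_on n V g.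
Proof.
  intros E Hf x Hx eps He. destruct (Hf x Hx eps He) as [d [Hd H]]. exists d; split; auto.
  intros y Hy Hc. rewrite <- !E; auto.
Qed.

Lemma continuous_on_subset n V V' f : (forall y, V' y -> V y) ->
  continuous_on n V f -> continuous_on n V' f.
Proof. intros S Hf x Hx eps He. destruct (Hf x (S x Hx) eps He) as [d [Hd H]]. exists d; split; auto. Qed.

Lemma Ck_continuous_on n m V f : Ck n m V f -> continuous_on n V f.
Proof. destruct m; simpl; tauto. Qed.

Lemma Ck_S n m V f : Ck n (S m) V f -> Ck n m V f.
Proof.
  revert f. induction m as [|m IH]; intros f H; simpl in *; [tauto|].
  destruct H as [H1 [H2 H3]]. repeat split; auto.
Qed.

Lemma Ck_ext n m V f g : open_in n V -> (forall y, V y -> f y = g y) -> Ck n m V f -> Ck n m V g.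
Proof.
  intros HV. revert f g. induction m as [|m IH]; intros f g E H; simpl in *.
  - eapply continuous_on_ext; eauto.
  - destruct H as [H1 [H2 H3]]. split; [eapply continuous_on_ext; eauto|]. split.
    + intros i x Hi Hx. eapply partial_local; eauto.
    + intros i Hi. apply (IH (partial i f)); auto.
      intros y Hy. symmetry. eapply partial_local; eauto.
Qed.

Lemma Ck_subset n m V V' f : (forall y, V' y -> V y) -> Ck n m V f -> Ck n m V' f.
Proof.
  intros S. revert f. induction m as [|m IH]; intros f H; simpl in *.
  - eapply continuous_on_subset; eauto.
  - destruct H as [H1 [H2 H3]]. split; [eapply continuous_on_subset; eauto|]. split; auto.
Qed.

Lemma Ck_const n m V c : Ck n m V (fun _ => c).
Proof.
  revert c. induction m as [|m IH]; intros c; simpl; [apply continuous_on_const|].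
  split; [apply continuous_on_const|]. split.
  - intros i x _ _. exists 0. exact (is_partial_const i c x).
  - intros i Hi. replace (partial i (fun _ : vec => c)) with (fun _ : vec => 0); auto.
    apply functional_extensionality; intros x.
    symmetry. apply (is_partial_partial i _ x 0), is_partial_const.
Qed.

Lemma Ck_plus n m V f g : open_in n V -> Ck n m V f -> Ck n m V g -> Ck n m V (fun y => f y + g y).
Proof.
  intros HV. revert f g. induction m as [|m IH]; intros f g Hf Hg; simpl in *.
  { apply (continuous_on_binop n V Rplus); auto. intros; apply continuous_at2_plus. }
  destruct Hf as [F1 [F2 F3]]; destruct Hg as [G1 [G2 G3]].
  split; [apply (continuous_on_binop n V Rplus); auto; intros; apply continuous_at2_plus|].
  split.
  - intros i x Hi Hx. eexists. apply is_partial_plus; apply partial_correct; auto.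
  - intros i Hi. apply (Ck_ext n m V (fun y => partial i f y + partial i g y)); auto.
    intros y Hy. symmetry. apply is_partial_partial.
    apply is_partial_plus; apply partial_correct; auto.
Qed.

Lemma Ck_mult n m V f g : open_in n V -> Ck n m V f -> Ck n m V g -> Ck n m V (fun y => f y * g y).
Proof.
  intros HV. revert f g. induction m as [|m IH]; intros f g Hf Hg.
  { apply (continuous_on_binop n V Rmult); auto. intros; apply continuous_at2_mult. }
  pose proof (Ck_S _ _ _ _ Hf) as Wf. pose proof (Ck_S _ _ _ _ Hg) as Wg.
  destruct Hf as [F1 [F2 F3]]; destruct Hg as [G1 [G2 G3]].
  split; [apply (continuous_on_binop n V Rmult); auto; intros; apply continuous_at2_mult|].
  split.
  - intros i x Hi Hx. eexists. apply is_partial_mult; apply partial_correct; auto.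
  - intros i Hi. apply (Ck_ext n m V (fun y => partial i f y * g y + f y * partial i g y)); auto.
    + intros y Hy. symmetry. apply is_partial_partial.
      apply is_partial_mult; apply partial_correct; auto.
    + apply Ck_plus; auto.
Qed.

Lemma Ck_inv n m V g : open_in n V -> (forall y, V y -> g y <> 0) -> Ck n m V g ->
  Ck n m V (fun y => / g y).
Proof.
  intros HV Hn. revert g Hn. induction m as [|m IH]; intros g Hn Hg.
  { apply continuous_on_inv; auto. }
  pose proof (Ck_S _ _ _ _ Hg) as Wg. destruct Hg as [G1 [G2 G3]].
  split; [apply continuous_on_inv; auto|]. split.
  - intros i x Hi Hx. eexists. apply is_partial_inv; auto. apply partial_correct; auto.
  - intros i Hi. apply (Ck_ext n m V (fun y => (-1) * partial i g y * (/ g y * / g y))); auto.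
    + intros y Hy. symmetry.
      rewrite (proj2 (is_partial_partial _ _ _ _
                 (is_partial_inv i g y _ (partial_correct _ _ _ (G2 i y Hi Hy)) (Hn y Hy)))).
      field. auto.
    + apply Ck_mult; auto; [apply Ck_mult; auto; apply Ck_const | apply Ck_mult; auto].
Qed.

Lemma smooth_on_partial n U f i : smooth_on n U f -> (i < n)%nat -> smooth_on n U (partial i f).
Proof. intros H Hi m. destruct (H (S m)) as [_ [_ H3]]. apply H3; auto. Qed.

Lemma smooth_on_has_partial n U f i x : smooth_on n U f -> (i < n)%nat -> U x -> has_partial i f x.
Proof. intros H Hi Hx. destruct (H 1%nat) as [_ [H2 _]]. auto. Qed.

(** * Chain rule along lines and Euler's relation *)

Definition C1_on (n : nat) (U : vec -> Prop) (F : vec -> R) : Prop :=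
  (forall i y, (i < n)%nat -> U y -> has_partial i F y) /\
  (forall i, (i < n)%nat -> continuous_on n U (partial i F)).

Lemma smooth_on_C1_on n U F : smooth_on n U F -> C1_on n U F.
Proof. intros H. destruct (H 1%nat) as [_ [H2 H3]]. split; auto. Qed.

Definition vadd (x : vec) (t : R) (v : vec) : vec := fun j => x j + t * v j.

Definition trunc (v : vec) (m : nat) : vec := fun j => if Nat.ltb j m then v j else 0.

Lemma vadd_0 x v : vadd x 0 v = x.
Proof. apply functional_extensionality; intros j; unfold vadd; ring. Qed.

Lemma close_shift_vadd n x w m M d t s : 0 <= M ->
  (forall j, (j < n)%nat -> Rabs (w j) <= M) ->
  Rabs t * (2 * M + 1) < d -> Rabs s <= Rabs t * M ->
  close n d (shift (vadd x t w) m s) x.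
Proof.
  intros HM Hw Ht Hs j Hj. unfold shift, vadd.
  replace (x j + t * w j + s * ebasis m j - x j) with (t * w j + s * ebasis m j) by ring.
  pose proof (Rabs_triang (t * w j) (s * ebasis m j)). rewrite !Rabs_mult in *.
  pose proof (Rabs_ebasis_le_1 m j). pose proof (Hw j Hj).
  pose proof (Rabs_pos t). pose proof (Rabs_pos s). pose proof (Rabs_pos (ebasis m j)).
  assert (Rabs t * Rabs (w j) <= Rabs t * M) by (apply Rmult_le_compat_l; lra).
  assert (Rabs s * Rabs (ebasis m j) <= Rabs s) by nra.
  nra.
Qed.

(* Moving along e_m from x + t w changes F, to first order in t, by t a (d_m F)(x):
   the mean value theorem puts the increment at a point near x, where d_m F is
   close to (d_m F)(x). *)
Lemma derivable_pt_lim_coordinate_step n U F x w m a M :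
  open_in n U -> U x -> C1_on n U F -> (m < n)%nat -> in_Rn n w -> 0 <= M ->
  (forall j, (j < n)%nat -> Rabs (w j) <= M) -> Rabs a <= M ->
  derivable_pt_lim (fun t => F (shift (vadd x t w) m (t * a)) - F (vadd x t w)) 0
    (partial m F x * a).
Proof.
  intros [HR Hball] Hx [HF HFc] Hm Hw HM Hwb Ha eps Heps.
  destruct (Hball x Hx) as [d0 [Hd0 Hb]].
  pose proof (Rabs_pos a) as Ha0.
  set (eps' := eps / (Rabs a + 1)).
  assert (He' : 0 < eps') by (unfold eps'; apply Rdiv_lt_0_compat; lra).
  destruct (HFc m Hm x Hx eps' He') as [d1 [Hd1 Hc]].
  set (d := Rmin d0 d1). assert (Hd : 0 < d) by (apply Rmin_pos; auto).
  assert (Hdel : 0 < d / (2 * M + 1)) by (apply Rdiv_lt_0_compat; lra).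
  exists (mkposreal _ Hdel). simpl. intros t Ht Hl.
  assert (Htd : Rabs t * (2 * M + 1) < d).
  { apply Rmult_lt_reg_r with (/ (2 * M + 1)); [apply Rinv_0_lt_compat; lra|].
    rewrite Rmult_assoc, Rinv_r, Rmult_1_r by lra. exact Hl. }
  set (y := vadd x t w).
  assert (Hclose : forall s, Rabs s <= Rabs (t * a) -> close n d (shift y m s) x).
  { intros s Hs. apply close_shift_vadd with M; auto.
    rewrite Rabs_mult in Hs. pose proof (Rabs_pos t).
    assert (Rabs t * Rabs a <= Rabs t * M) by (apply Rmult_le_compat_l; lra). lra. }
  assert (HU : forall s, Rabs s <= Rabs (t * a) -> U (shift y m s)).
  { intros s Hs. apply Hb.
    - apply in_Rn_shift; auto. intros j Hj. unfold y, vadd. rewrite HR, Hw by auto. ring.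
    - eapply close_le; [apply Rmin_l | exact (Hclose s Hs)]. }
  destruct (MVT_centered (fun s => F (shift y m s)) (fun s => partial m F (shift y m s)) (t * a))
    as [sg [Hsg Heq]].
  { intros s Hs. apply derivable_pt_lim_along_line. apply HF; auto. }
  rewrite shift_0 in Heq. rewrite Rplus_0_l. fold y.
  rewrite Rmult_0_l, vadd_0, shift_0, Rminus_diag, Rminus_0_r, Heq.
  replace (partial m F (shift y m sg) * (t * a) / t - partial m F x * a)
    with (a * (partial m F (shift y m sg) - partial m F x)) by (field; auto).
  rewrite Rabs_mult.
  assert (Rabs (partial m F (shift y m sg) - partial m F x) < eps').
  { apply Hc; [apply HU; auto|]. eapply close_le; [apply Rmin_r | exact (Hclose sg Hsg)]. }
  assert (eps' * (Rabs a + 1) = eps) by (unfold eps'; field; lra).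
  pose proof (Rabs_pos (partial m F (shift y m sg) - partial m F x)). nra.
Qed.

Lemma chain_rule_line n U F x v : open_in n U -> U x -> C1_on n U F -> in_Rn n v ->
  derivable_pt_lim (fun t => F (vadd x t v)) 0 (fsum n (fun i => partial i F x * v i)).
Proof.
  intros HU Hx HF Hv.
  set (M := fsum n (fun j => Rabs (v j))). assert (HM : 0 <= M) by apply fsum_Rabs_nonneg.
  assert (Htrunc : forall m, (m <= n)%nat -> derivable_pt_lim (fun t => F (vadd x t (trunc v m))) 0
                                             (fsum m (fun i => partial i F x * v i))).
  { induction m as [|m IH]; intros Hm; simpl.
    - eapply derivable_pt_lim_ext; [|apply (derivable_pt_lim_const (F x))].
      intros t. unfold fct_cte. f_equal.
      apply functional_extensionality; intros j. unfold vadd, trunc. simpl. ring.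
    - assert (Hw : in_Rn n (trunc v m)) by (intros j Hj; unfold trunc; destruct (Nat.ltb j m); auto).
      assert (Hwb : forall j, (j < n)%nat -> Rabs (trunc v m j) <= M).
      { intros j Hj. unfold trunc. destruct (Nat.ltb j m); [apply Rabs_le_fsum_Rabs; auto|].
        rewrite Rabs_R0; auto. }
      pose proof (derivable_pt_lim_coordinate_step n U F x (trunc v m) m (v m) M HU Hx HF
                    ltac:(lia) Hw HM Hwb ltac:(apply Rabs_le_fsum_Rabs; lia)) as Hs.
      eapply derivable_pt_lim_ext; [|exact (derivable_pt_lim_plus _ _ 0 _ _ (IH ltac:(lia)) Hs)].
      intros t. unfold plus_fct.
      replace (vadd x t (trunc v (S m))) with (shift (vadd x t (trunc v m)) m (t * v m)); [ring|].
      apply functional_extensionality; intros j. unfold shift, vadd, trunc, ebasis.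
      destruct (Nat.ltb_spec j m); destruct (Nat.ltb_spec j (S m)); destruct (Nat.eqb_spec m j);
        subst; try lia; ring. }
  eapply derivable_pt_lim_ext; [|apply (Htrunc n (le_n n))]. intros t. simpl. f_equal.
  apply functional_extensionality; intros j. unfold vadd, trunc.
  destruct (Nat.ltb_spec j n); auto. rewrite (Hv j) by lia. ring.
Qed.

Lemma Rpower_pos x p : 0 < Rpower x p.
Proof. apply exp_pos. Qed.

Lemma Rpower_1_l p : Rpower 1 p = 1.
Proof. unfold Rpower. rewrite ln_1, Rmult_0_r, exp_0. reflexivity. Qed.

(* Differentiate F ((1 + t) x) = (1 + t)^p F x at t = 0. *)
Lemma euler_homogeneous n U F x p : open_in n U -> U x -> C1_on n U F ->
  (forall y l, U y -> 0 < l -> F (vscale l y) = Rpower l p * F y) ->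
  fsum n (fun i => partial i F x * x i) = p * F x.
Proof.
  intros HU Hx HF Hh.
  pose proof (chain_rule_line n U F x x HU Hx HF (proj1 HU x Hx)) as H1.
  assert (H2 : derivable_pt_lim (fun t => Rpower (1 + t) p * F x) 0 (p * F x)).
  { pose proof (derivable_pt_lim_comp (fun t => 1 + t) (fun s => Rpower s p) 0 _ _
      (derivable_pt_lim_plus _ _ 0 _ _ (derivable_pt_lim_const 1 0) (derivable_pt_lim_id 0))
      (derivable_pt_lim_power (1 + 0) p ltac:(lra))) as Hp.
    pose proof (derivable_pt_lim_mult _ _ 0 _ _ Hp (derivable_pt_lim_const (F x) 0)) as Hm.
    unfold comp, fct_cte in Hm. cbv beta in Hm. rewrite Rplus_0_r, !Rpower_1_l in Hm.
    replace (p * F x) with (p * 1 * (0 + 1) * F x + 1 * 0) by ring. exact Hm. }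
  eapply uniqueness_limite; [exact H1|].
  apply (derivable_pt_lim_locally_ext (fun t => Rpower (1 + t) p * F x) _ 0 (-1) 1 _ ltac:(lra));
    [|exact H2].
  intros t Ht. rewrite <- Hh by (auto; lra). f_equal.
  apply functional_extensionality; intros j. unfold vscale, vadd. ring.
Qed.

Lemma is_partial_vscale n U F x l C i : open_in n U -> U x -> (i < n)%nat -> 0 < l ->
  (forall y, U y -> F (vscale l y) = C * F y) -> has_partial i F x ->
  is_partial i F (vscale l x) (C / l * partial i F x).
Proof.
  intros HU Hx Hi Hl HF Hp. destruct (open_in_shift n U x i HU Hx Hi) as [d [Hd Hs]].
  assert (H0 : derivable_pt_lim (fun s => F (shift x i s)) (/ l * 0) (partial i F x)).
  { rewrite Rmult_0_r. apply partial_correct; auto. }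
  assert (Hlin : derivable_pt_lim (fun t => / l * t) 0 (/ l)).
  { pose proof (derivable_pt_lim_scal _ (/ l) 0 _ (derivable_pt_lim_id 0)) as H.
    rewrite Rmult_1_r in H. exact H. }
  pose proof (derivable_pt_lim_scal _ C 0 _
                (derivable_pt_lim_comp (fun t => / l * t) _ 0 _ _ Hlin H0)) as H1.
  unfold is_partial. replace (C / l * partial i F x) with (C * (partial i F x * / l)) by (field; lra).
  apply (derivable_pt_lim_locally_ext (mult_real_fct C (comp (fun s => F (shift x i s)) (fun t => / l * t)))
           _ 0 (- (l * d)) (l * d) _ ltac:(nra)); [|exact H1].
  intros t Ht. unfold mult_real_fct, comp. rewrite <- HF.
  - f_equal. apply functional_extensionality; intros j. unfold vscale, shift. field; lra.
  - apply Hs. rewrite Rabs_mult, Rabs_inv, (Rabs_right l) by lra.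
    apply Rmult_lt_reg_l with l; auto. rewrite <- Rmult_assoc, Rinv_r, Rmult_1_l by lra.
    apply Rabs_def1; lra.
Qed.

(** * Symmetry of second derivatives *)

Definition Delta (f : vec -> R) (x : vec) (i j : nat) (t : R) : R :=
  f (shift (shift x j t) i t) - f (shift x i t) - f (shift x j t) + f x.

Lemma Delta_comm f x i j t : Delta f x j i t = Delta f x i j t.
Proof. unfold Delta. rewrite shift_comm. ring. Qed.

Lemma Delta_mean_value U f x i j t : 0 < t ->
  (forall s tau, Rabs s <= t -> Rabs tau <= t -> U (shift (shift x i s) j tau)) ->
  (forall y, U y -> has_partial i f y) -> (forall y, U y -> has_partial j (partial i f) y) ->
  exists s tau, Rabs s <= t /\ Rabs tau <= t /\
    Delta f x i j t = partial j (partial i f) (shift (shift x i s) j tau) * t * t.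
Proof.
  intros Ht HP H1 H2. assert (Habs : Rabs t = t) by (apply Rabs_right; lra).
  assert (Hxs : forall s, Rabs s <= t -> U (shift x i s)).
  { intros s Hs. rewrite <- (shift_0 (shift x i s) j). apply HP; auto. rewrite Rabs_R0; lra. }
  assert (Hxjs : forall s, Rabs s <= t -> U (shift (shift x j t) i s)).
  { intros s Hs. rewrite <- shift_comm. apply HP; lra. }
  destruct (MVT_centered (fun s => f (shift (shift x j t) i s) - f (shift x i s))
              (fun s => partial i f (shift (shift x j t) i s) - partial i f (shift x i s)) t)
    as [sg [Hsg Hm1]].
  { intros s Hs. rewrite Habs in Hs.
    apply derivable_pt_lim_minus; apply derivable_pt_lim_along_line, H1; auto. }
  rewrite Habs in Hsg.
  destruct (MVT_centered (fun tau => partial i f (shift (shift x i sg) j tau))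
              (fun tau => partial j (partial i f) (shift (shift x i sg) j tau)) t)
    as [tg [Htg Hm2]].
  { intros s Hs. rewrite Habs in Hs. apply derivable_pt_lim_along_line, H2, HP; auto. }
  rewrite Habs in Htg. rewrite !shift_0 in Hm1. rewrite shift_0, (shift_comm x i j sg t) in Hm2.
  exists sg, tg. split; [exact Hsg|]. split; [exact Htg|].
  unfold Delta.
  replace (f (shift (shift x j t) i t) - f (shift x i t) - f (shift x j t) + f x)
    with (f (shift (shift x j t) i t) - f (shift x i t) - (f (shift x j t) - f x)) by ring.
  rewrite Hm1, Hm2. ring.
Qed.

Lemma Delta_limit n U f x i j : open_in n U -> U x -> (i < n)%nat -> (j < n)%nat ->
  (forall y, U y -> has_partial i f y) -> (forall y, U y -> has_partial j (partial i f) y) ->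
  continuous_on n U (partial j (partial i f)) ->
  forall eps, 0 < eps -> exists del, 0 < del /\ forall t, 0 < t < del ->
    Rabs (Delta f x i j t / (t * t) - partial j (partial i f) x) < eps.
Proof.
  intros [HR Hball] Hx Hi Hj H1 H2 Hc eps He.
  destruct (Hball x Hx) as [d0 [Hd0 Hb]]. destruct (Hc x Hx eps He) as [d1 [Hd1 Hcl]].
  exists (Rmin d0 d1 / 2). split; [pose proof (Rmin_pos _ _ Hd0 Hd1); lra|].
  intros t Ht. pose proof (Rmin_l d0 d1). pose proof (Rmin_r d0 d1).
  assert (Hsq : forall s tau, Rabs s <= t -> Rabs tau <= t ->
             U (shift (shift x i s) j tau) /\ close n d1 (shift (shift x i s) j tau) x).
  { intros s tau Hs Htau.
    assert (Hdev : forall m, Rabs (shift (shift x i s) j tau m - x m) <= 2 * t).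
    { intros m. pose proof (Rabs_shift_sub_le (shift x i s) j tau m).
      pose proof (Rabs_shift_sub_le x i s m).
      pose proof (Rabs_triang (shift (shift x i s) j tau m - shift x i s m) (shift x i s m - x m)).
      replace (shift (shift x i s) j tau m - shift x i s m + (shift x i s m - x m))
        with (shift (shift x i s) j tau m - x m) in * by ring. lra. }
    split; [apply Hb; [apply in_Rn_shift; [apply in_Rn_shift|]; auto|]|];
      intros m Hm; specialize (Hdev m); lra. }
  destruct (Delta_mean_value U f x i j t ltac:(lra)) as [s [tau [Hs [Htau ->]]]]; auto.
  { intros s tau Hs Htau. apply Hsq; auto. }
  replace (partial j (partial i f) (shift (shift x i s) j tau) * t * t / (t * t))
    with (partial j (partial i f) (shift (shift x i s) j tau)) by (field; lra).
  destruct (Hsq s tau Hs Htau). apply Hcl; auto.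
Qed.

Lemma schwarz n U f x i j : open_in n U -> U x -> (i < n)%nat -> (j < n)%nat ->
  (forall y, U y -> has_partial i f y) -> (forall y, U y -> has_partial j f y) ->
  (forall y, U y -> has_partial j (partial i f) y) -> (forall y, U y -> has_partial i (partial j f) y) ->
  continuous_on n U (partial j (partial i f)) -> continuous_on n U (partial i (partial j f)) ->
  partial i (partial j f) x = partial j (partial i f) x.
Proof.
  intros HU Hx Hi Hj A1 A2 A3 A4 C1 C2.
  destruct (Req_dec (partial i (partial j f) x) (partial j (partial i f) x)) as [E|Ne]; auto.
  exfalso. set (e := Rabs (partial i (partial j f) x - partial j (partial i f) x) / 4).
  assert (He : 0 < e) by (unfold e; apply Rdiv_lt_0_compat; [apply Rabs_pos_lt; lra|lra]).
  destruct (Delta_limit n U f x i j HU Hx Hi Hj A1 A3 C1 e He) as [d1 [Hd1 P1]].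
  destruct (Delta_limit n U f x j i HU Hx Hj Hi A2 A4 C2 e He) as [d2 [Hd2 P2]].
  set (t := Rmin d1 d2 / 2). pose proof (Rmin_pos _ _ Hd1 Hd2).
  pose proof (Rmin_l d1 d2). pose proof (Rmin_r d1 d2).
  specialize (P1 t ltac:(unfold t; lra)). specialize (P2 t ltac:(unfold t; lra)).
  rewrite Delta_comm in P2. set (q := Delta f x i j t / (t * t)) in *.
  pose proof (Rabs_triang (q - partial j (partial i f) x) (- (q - partial i (partial j f) x))).
  rewrite Rabs_Ropp in H2.
  replace (q - partial j (partial i f) x + - (q - partial i (partial j f) x))
    with (partial i (partial j f) x - partial j (partial i f) x) in H2 by ring.
  unfold e in *. lra.
Qed.

Lemma bil_ext n A B v w : (forall i j, (i < n)%nat -> (j < n)%nat -> A i j = B i j) ->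
  bil n A v w = bil n B v w.
Proof.
  intros H. unfold bil. apply fsum_ext; intros i Hi. apply fsum_ext; intros j Hj.
  rewrite H; auto.
Qed.

Lemma bil_add_rank1 n p q A a b v w :
  bil n (fun i j => p * A i j + q * (a i * b j)) v w =
  p * bil n A v w + q * (fsum n (fun i => a i * v i) * fsum n (fun j => b j * w j)).
Proof.
  unfold bil.
  transitivity (fsum n (fun i => p * fsum n (fun j => A i j * v i * w j)
                              + q * (a i * v i) * fsum n (fun j => b j * w j))).
  - apply fsum_ext; intros i Hi. rewrite <- !fsum_scal, <- fsum_plus.
    apply fsum_ext; intros j Hj. ring.
  - rewrite fsum_plus, fsum_scal, fsum_scal_r, fsum_scal. ring.
Qed.

Lemma bil_vadd_l n A v t v' w : bil n A (vadd v t v') w = bil n A v w + t * bil n A v' w.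
Proof.
  unfold bil, vadd. rewrite <- fsum_scal, <- fsum_plus. apply fsum_ext; intros i Hi.
  rewrite <- fsum_scal, <- fsum_plus. apply fsum_ext; intros j Hj. ring.
Qed.

Lemma bil_vadd_r n A v w t w' : bil n A v (vadd w t w') = bil n A v w + t * bil n A v w'.
Proof.
  unfold bil, vadd. rewrite <- fsum_scal, <- fsum_plus. apply fsum_ext; intros i Hi.
  rewrite <- fsum_scal, <- fsum_plus. apply fsum_ext; intros j Hj. ring.
Qed.

Lemma bil_vscale n A l v w : bil n A (vscale l v) (vscale l w) = l * l * bil n A v w.
Proof.
  unfold bil, vscale. rewrite <- fsum_scal. apply fsum_ext; intros i Hi.
  rewrite <- fsum_scal. apply fsum_ext; intros j Hj. ring.
Qed.

Lemma bil_sym n A v w : (forall i j, (i < n)%nat -> (j < n)%nat -> A i j = A j i) ->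
  bil n A v w = bil n A w v.
Proof.
  intros H. unfold bil. rewrite fsum_swap. apply fsum_ext; intros i Hi.
  apply fsum_ext; intros j Hj. rewrite H; auto. ring.
Qed.

Lemma bil_zero_l n A v w : (forall i, (i < n)%nat -> v i = 0) -> bil n A v w = 0.
Proof.
  intros H. unfold bil. apply fsum_zero; intros i Hi.
  apply fsum_zero; intros j Hj. rewrite H; auto; ring.
Qed.

Lemma dh_vadd n h x v t v' : dh n h x (vadd v t v') = dh n h x v + t * dh n h x v'.
Proof. unfold dh, vadd. rewrite <- fsum_scal, <- fsum_plus. apply fsum_ext; intros; ring. Qed.

Lemma dh_vscale n h x l v : dh n h x (vscale l v) = l * dh n h x v.
Proof. unfold dh, vscale. rewrite <- fsum_scal. apply fsum_ext; intros; ring. Qed.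

Lemma gU_vscale n h x l v w : gU n h x (vscale l v) (vscale l w) = l * l * gU n h x v w.
Proof. unfold gU. rewrite bil_vscale. ring. Qed.

Lemma not_nonzero_vec n v : ~ nonzero_vec n v -> forall j, (j < n)%nat -> v j = 0.
Proof. intros Hv j Hj. destruct (Req_dec (v j) 0); auto. exfalso. apply Hv. exists j; auto. Qed.

(** * The metrics g_U, g_check and g'_c *)

Section HomogeneousPotential.

Variables (n : nat) (U : vec -> Prop) (h : vec -> R) (k : R).
Hypothesis Hopen : open_in n U.
Hypothesis Hcone : forall x l, U x -> 0 < l -> U (vscale l x).
Hypothesis Hsmooth : smooth_on n U h.
Hypothesis Hpos : forall x, U x -> 0 < h x.
Hypothesis Hk : 1 < k.
Hypothesis Hhom : forall x l, U x -> 0 < l -> h (vscale l x) = Rpower l k * h x.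

Lemma has_partial_h i y : (i < n)%nat -> U y -> has_partial i h y.
Proof. intros; apply (smooth_on_has_partial n U); auto. Qed.

Lemma has_partial2_h i j y : (i < n)%nat -> (j < n)%nat -> U y -> has_partial i (partial j h) y.
Proof. intros; apply (smooth_on_has_partial n U); auto. apply smooth_on_partial; auto. Qed.

Lemma partial_h_vscale j y l : (j < n)%nat -> U y -> 0 < l ->
  partial j h (vscale l y) = Rpower l k / l * partial j h y.
Proof.
  intros Hj Hy Hl. apply is_partial_partial, (is_partial_vscale n U); auto.
  apply has_partial_h; auto.
Qed.

Lemma partial2_h_vscale i j y l : (i < n)%nat -> (j < n)%nat -> U y -> 0 < l ->
  partial i (partial j h) (vscale l y) = Rpower l k / l / l * partial i (partial j h) y.
Proof.
  intros Hi Hj Hy Hl. apply is_partial_partial, (is_partial_vscale n U); auto.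
  - intros; apply partial_h_vscale; auto.
  - apply has_partial2_h; auto.
Qed.

Lemma dh_euler x : U x -> dh n h x x = k * h x.
Proof. intros Hx. apply (euler_homogeneous n U); auto. apply smooth_on_C1_on; auto. Qed.

Lemma hess_euler x j : U x -> (j < n)%nat ->
  fsum n (fun i => hess h x i j * x i) = (k - 1) * partial j h x.
Proof.
  intros Hx Hj. apply (euler_homogeneous n U); auto.
  - apply smooth_on_C1_on, smooth_on_partial; auto.
  - intros y l Hy Hl. rewrite partial_h_vscale by auto. f_equal.
    replace (k - 1) with (k + - (1)) by ring.
    rewrite Rpower_plus, Rpower_Ropp, Rpower_1; auto.
Qed.

Lemma hess_sym x i j : U x -> (i < n)%nat -> (j < n)%nat -> hess h x i j = hess h x j i.
Proof.
  intros Hx Hi Hj. unfold hess.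
  apply (schwarz n U); intros; auto using has_partial_h, has_partial2_h;
    apply (Ck_continuous_on n 0); repeat apply smooth_on_partial; auto.
Qed.

Lemma gU_sym x v w : U x -> gU n h x v w = gU n h x w v.
Proof. intros Hx. unfold gU. f_equal. apply bil_sym. intros; apply hess_sym; auto. Qed.

Lemma gU_euler x w : U x -> gU n h x x w = - (k - 1) * dh n h x w.
Proof.
  intros Hx. unfold gU, bil, dh. rewrite fsum_swap, <- fsum_scal.
  replace (- fsum n _) with (-1 * fsum n (fun j => fsum n (fun i => hess h x i j * x i * w j)))
    by ring.
  rewrite <- fsum_scal. apply fsum_ext; intros j Hj.
  rewrite (fsum_scal_r n (fun i => hess h x i j * x i)), hess_euler by auto. ring.
Qed.

Lemma gU_vadd_euler x u a : U x ->
  gU n h x (vadd u a x) (vadd u a x)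
  = gU n h x u u - 2 * a * (k - 1) * dh n h x u - a * a * (k - 1) * (k * h x).
Proof.
  intros Hx. unfold gU at 1. rewrite bil_vadd_l, !bil_vadd_r. fold (gU n h x).
  replace (- (bil n (hess h x) u u + a * bil n (hess h x) u x
              + a * (bil n (hess h x) x u + a * bil n (hess h x) x x)))
    with (gU n h x u u + a * gU n h x u x + a * (gU n h x x u + a * gU n h x x x))
    by (unfold gU; ring).
  rewrite (gU_sym x u x), !gU_euler, dh_euler by auto. ring.
Qed.

Lemma dh_vscale_x x l v : U x -> 0 < l -> dh n h (vscale l x) v = Rpower l k / l * dh n h x v.
Proof.
  intros Hx Hl. unfold dh. rewrite <- fsum_scal. apply fsum_ext; intros i Hi.
  rewrite partial_h_vscale by auto. ring.
Qed.

Lemma gU_vscale_x x l v w : U x -> 0 < l ->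
  gU n h (vscale l x) v w = Rpower l k / l / l * gU n h x v w.
Proof.
  intros Hx Hl. unfold gU, bil. rewrite <- Ropp_mult_distr_r. f_equal. rewrite <- fsum_scal.
  apply fsum_ext; intros i Hi. rewrite <- fsum_scal. apply fsum_ext; intros j Hj.
  unfold hess. rewrite partial2_h_vscale by auto. ring.
Qed.

Lemma gcheck_eq x v w : U x ->
  gcheck n h x v w = gU n h x v w + (k - 1) / (k * h x) * (dh n h x v * dh n h x w).
Proof.
  intros Hx. unfold gcheck. rewrite !gU_euler, dh_euler by auto.
  pose proof (Hpos x Hx). field. split; nra.
Qed.

Definition proj_ker_dh (x v : vec) : vec := vadd v (- (dh n h x v / (k * h x))) x.

Lemma dh_proj_ker_dh x v : U x -> dh n h x (proj_ker_dh x v) = 0.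
Proof.
  intros Hx. unfold proj_ker_dh. rewrite dh_vadd, dh_euler by auto.
  pose proof (Hpos x Hx). field. split; lra.
Qed.

Lemma gcheck_proj_ker_dh x v : U x -> gcheck n h x v v = gU n h x (proj_ker_dh x v) (proj_ker_dh x v).
Proof.
  intros Hx. pose proof (dh_proj_ker_dh x v Hx) as Hdu.
  set (a := dh n h x v / (k * h x)) in *. set (u := proj_ker_dh x v) in *.
  assert (Hv : v = vadd u a x).
  { apply functional_extensionality; intros j. unfold u, proj_ker_dh, vadd. fold a. ring. }
  rewrite gcheck_eq by auto. rewrite Hv at 1 2 3 4.
  rewrite gU_vadd_euler, dh_vadd, Hdu, dh_euler by auto.
  pose proof (Hpos x Hx). field. split; lra.
Qed.

Hypothesis Hlevel : forall x, U x -> h x = 1 -> forall v, nonzero_vec n v ->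
  dh n h x v = 0 -> gU n h x v v > 0.

(* Rescale x onto the level set {h = 1}, where positivity is assumed; both sides scale alike. *)
Lemma gU_pos_on_ker_dh x u : U x -> nonzero_vec n u -> dh n h x u = 0 -> gU n h x u u > 0.
Proof.
  intros Hx Hu Hd. pose proof (Hpos x Hx) as Hp.
  set (l := Rpower (h x) (- / k)). assert (Hl : 0 < l) by apply Rpower_pos.
  assert (HC : Rpower l k = / h x).
  { unfold l. rewrite Rpower_mult. replace (- / k * k) with (- (1)) by (field; lra).
    rewrite Rpower_Ropp, Rpower_1; auto. }
  assert (Hh1 : h (vscale l x) = 1) by (rewrite Hhom, HC by auto; field; lra).
  specialize (Hlevel _ (Hcone x l Hx Hl) Hh1 u Hu).
  rewrite dh_vscale_x, Hd, Rmult_0_r, gU_vscale_x in Hlevel by auto.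
  specialize (Hlevel eq_refl).
  assert (0 < Rpower l k / l / l) by (repeat apply Rdiv_lt_0_compat; auto; apply Rpower_pos).
  apply Rlt_gt, Rmult_lt_reg_l with (Rpower l k / l / l); lra.
Qed.

Lemma gcheck_nonneg x v : U x -> 0 <= gcheck n h x v v.
Proof.
  intros Hx. rewrite gcheck_proj_ker_dh by auto.
  destruct (classic (nonzero_vec n (proj_ker_dh x v))) as [Hn|Hn].
  - left. apply gU_pos_on_ker_dh; auto using dh_proj_ker_dh.
  - right. unfold gU. rewrite bil_zero_l; [ring|]. apply not_nonzero_vec; auto.
Qed.

(* The kernel of g_check is spanned by xi, on which dh does not vanish. *)
Lemma gcheck_eq0_dh_neq0 x v : U x -> nonzero_vec n v -> gcheck n h x v v = 0 -> dh n h x v <> 0.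
Proof.
  intros Hx [j [Hj Hvj]] H0 Hd. rewrite gcheck_proj_ker_dh in H0 by auto.
  destruct (classic (nonzero_vec n (proj_ker_dh x v))) as [Hn|Hn].
  - pose proof (gU_pos_on_ker_dh x _ Hx Hn (dh_proj_ker_dh x v Hx)). lra.
  - apply Hvj. pose proof (not_nonzero_vec n _ Hn j Hj) as Hu.
    unfold proj_ker_dh, vadd in Hu. rewrite Hd in Hu. unfold Rdiv in Hu. lra.
Qed.


Lemma Uc_pos c x : Uc U h k c x -> U x /\ 0 < h x + c /\ 0 < h x - c * (k - 1).
Proof.
  intros [Hx Hc]. pose proof (Hpos x Hx).
  destruct (Rle_dec c 0); repeat split; auto; nra.
Qed.

Lemma Uc_open c : open_in n (Uc U h k c).
Proof.
  destruct Hopen as [HR Hball]. split; [intros x [Hx _]; auto|].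
  intros x [Hx Hc].
  set (q := if Rle_dec c 0 then h x + c else h x - c * (k - 1)).
  assert (Hq : 0 < q) by (unfold q; destruct (Rle_dec c 0); lra).
  destruct (Ck_continuous_on n 0 U h (Hsmooth 0%nat) x Hx q Hq) as [d1 [Hd1 Hd]].
  destruct (Hball x Hx) as [d0 [Hd0 Hb]].
  exists (Rmin d0 d1). split; [apply Rmin_pos; auto|]. intros y Hy Hcl.
  assert (Uy : U y) by (apply Hb; auto; eapply close_le; [apply Rmin_l|exact Hcl]).
  split; auto. pose proof (Rabs_def2 _ _ (Hd y Uy (close_le _ _ _ _ _ (Rmin_r d0 d1) Hcl))).
  unfold q in *. destruct (Rle_dec c 0); lra.
Qed.

Lemma hess_ln c x i j : Uc U h k c x -> (i < n)%nat -> (j < n)%nat ->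
  hess (fun y => ln (h y + c)) x i j
  = / (h x + c) * hess h x i j + (- / (h x + c) ^ 2) * (partial i h x * partial j h x).
Proof.
  intros Hx Hi Hj.
  assert (E : forall y, Uc U h k c y ->
             partial j h y * / (h y + c) = partial j (fun y => ln (h y + c)) y).
  { intros y Hy. destruct (Uc_pos c y Hy) as [Uy [P1 _]]. symmetry. apply is_partial_partial.
    replace (partial j h y * / (h y + c)) with ((partial j h y + 0) / (h y + c)) by (field; lra).
    apply is_partial_ln; auto. apply is_partial_plus; [|apply is_partial_const].
    apply partial_correct, has_partial_h; auto. }
  destruct (Uc_pos c x Hx) as [Ux [P1 _]].
  assert (Hd : is_partial i (fun y => partial j h y * / (h y + c)) x
     (partial i (partial j h) x * / (h x + c)
      + partial j h x * (- (partial i h x + 0) / (h x + c) ^ 2))).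
  { apply is_partial_mult; [apply partial_correct, has_partial2_h; auto|].
    apply (is_partial_inv i (fun y => h y + c)); [|lra].
    apply is_partial_plus; [apply partial_correct, has_partial_h; auto | apply is_partial_const]. }
  destruct (is_partial_partial _ _ _ _ Hd) as [Hhp Hv].
  destruct (partial_local n _ _ _ x i (Uc_open c) Hx Hi E Hhp) as [_ Hl].
  unfold hess. rewrite Hl, Hv. field. lra.
Qed.

Lemma gprime_eq c x v w : Uc U h k c x ->
  gprime n h c x v w = / (h x + c) * gU n h x v w + / (h x + c) ^ 2 * (dh n h x v * dh n h x w).
Proof.
  intros Hx. unfold gprime, gU, dh.
  rewrite (bil_ext n _ (fun i j => / (h x + c) * hess h x i j
                                   + (- / (h x + c) ^ 2) * (partial i h x * partial j h x))).
  - rewrite bil_add_rank1. ring.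
  - intros i j Hi Hj. apply hess_ln; auto.
Qed.

Lemma gprime_gcheck_eq c x v w : Uc U h k c x ->
  gprime n h c x v w
  = / (h x + c) * gcheck n h x v w
    + (h x - c * (k - 1)) / (k * h x) * / (h x + c) ^ 2 * (dh n h x v * dh n h x w).
Proof.
  intros Hx. destruct (Uc_pos c x Hx) as [Ux [P1 P2]].
  rewrite gprime_eq, gcheck_eq by auto. pose proof (Hpos x Ux). field. repeat split; nra.
Qed.

Lemma gprime_entries_smooth c i j : (i < n)%nat -> (j < n)%nat ->
  smooth_on n (Uc U h k c) (fun x => - hess (fun y => ln (h y + c)) x i j).
Proof.
  intros Hi Hj m. pose proof (Uc_open c) as HO.
  assert (Hsub : forall y, Uc U h k c y -> U y) by (intros y [Hy _]; exact Hy).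
  apply (Ck_ext n m _ (fun x => (-1) * (/ (h x + c) * partial i (partial j h) x
            + (-1) * (/ (h x + c) * / (h x + c)) * (partial i h x * partial j h x)))); auto.
  - intros y Hy. rewrite hess_ln by auto. unfold hess.
    destruct (Uc_pos c y Hy) as [_ [P _]]. field. lra.
  - assert (Hinv : Ck n m (Uc U h k c) (fun x => / (h x + c))).
    { apply Ck_inv; auto.
      - intros y Hy. destruct (Uc_pos c y Hy) as [_ [P _]]. lra.
      - apply Ck_plus; auto; [apply (Ck_subset n m U); auto | apply Ck_const]. }
    assert (Hp : forall l, (l < n)%nat -> Ck n m (Uc U h k c) (partial l h)).
    { intros l Hl. apply (Ck_subset n m U); auto. apply smooth_on_partial; auto. }
    assert (Hpp : Ck n m (Uc U h k c) (partial i (partial j h))).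
    { apply (Ck_subset n m U); auto. repeat apply smooth_on_partial; auto. }
    repeat (first [apply Ck_const | apply Ck_plus | apply Ck_mult]; auto).
Qed.

Lemma gprime_sym c x v w : Uc U h k c x -> gprime n h c x v w = gprime n h c x w v.
Proof.
  intros Hx. rewrite !gprime_eq by auto. rewrite (gU_sym x v w) by (apply Hx). ring.
Qed.

(* Both terms of the g_check decomposition are nonnegative on U_c, and they cannot vanish
   together since the kernel of g_check is transversal to ker dh. *)
Lemma gprime_pos c x v : Uc U h k c x -> nonzero_vec n v -> gprime n h c x v v > 0.
Proof.
  intros Hx Hv. destruct (Uc_pos c x Hx) as [Ux [P1 P2]]. pose proof (Hpos x Ux).
  rewrite gprime_gcheck_eq by auto.
  pose proof (gcheck_nonneg x v Ux) as G.
  assert (Hsq : 0 <= dh n h x v * dh n h x v) by nra.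
  assert (Hcoef : 0 < (h x - c * (k - 1)) / (k * h x) * / (h x + c) ^ 2).
  { apply Rmult_lt_0_compat; [apply Rdiv_lt_0_compat; nra|]. apply Rinv_0_lt_compat; nra. }
  assert (0 < / (h x + c)) by (apply Rinv_0_lt_compat; lra).
  destruct G as [G|G].
  - nra.
  - pose proof (gcheck_eq0_dh_neq0 x v Ux Hv (eq_sym G)).
    assert (0 < dh n h x v * dh n h x v) by nra. rewrite <- G. nra.
Qed.

Lemma Uc_vscale c c' l x : c * c' > 0 -> 0 < l -> Rpower l k = c' / c ->
  Uc U h k c x -> Uc U h k c' (vscale l x).
Proof.
  intros Hcc Hl HC [Ux Hx]. split; [apply Hcone; auto|].
  rewrite Hhom, HC by auto. pose proof (Hpos x Ux).
  assert (Hc : c <> 0) by (intros ->; lra).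
  assert (Hq : 0 < c' / c) by (replace (c' / c) with (c * c' / (c * c)) by (field; auto);
                                 apply Rdiv_lt_0_compat; nra).
  destruct (Rle_dec c 0), (Rle_dec c' 0); try (exfalso; nra).
  - replace (c' / c * h x + c') with (c' / c * (h x + c)) by (field; auto). nra.
  - replace (c' / c * h x - c' * (k - 1)) with (c' / c * (h x - c * (k - 1))) by (field; auto). nra.
Qed.

(* Scaling by l with l^k = c'/c multiplies h + c by c'/c, and the Hessian of h by l^(k-2);
   the factors cancel in g'_c. *)
Lemma gprime_vscale c c' l x v w : c * c' > 0 -> 0 < l -> Rpower l k = c' / c ->
  Uc U h k c x ->
  gprime n h c' (vscale l x) (vscale l v) (vscale l w) = gprime n h c x v w.
Proof.
  intros Hcc Hl HC Hx. destruct (Uc_pos c x Hx) as [Ux [P1 _]].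
  assert (Hc : c <> 0) by (intros ->; lra). assert (Hc' : c' <> 0) by (intros ->; lra).
  rewrite !gprime_eq by (auto; eapply Uc_vscale; eauto).
  rewrite gU_vscale, !dh_vscale, gU_vscale_x, !dh_vscale_x, Hhom, HC by auto.
  replace (c' / c * h x + c') with (c' / c * (h x + c)) by (field; auto).
  field. repeat split; auto; lra.
Qed.

End HomogeneousPotential.

Lemma Rpower_inv_l l p : 0 < l -> Rpower (/ l) p = / Rpower l p.
Proof.
  intros Hl. unfold Rpower. rewrite ln_Rinv by auto.
  replace (p * - ln l) with (- (p * ln l)) by ring. apply exp_Ropp.
Qed.

Lemma Rpower_root q p : 0 < q -> p <> 0 -> Rpower (Rpower q (/ p)) p = q.
Proof.
  intros Hq Hp. rewrite Rpower_mult. replace (/ p * p) with 1 by (field; auto).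
  apply Rpower_1; auto.
Qed.

Theorem mainTheorem16
  (n : nat) (U : vec -> Prop) (h : vec -> R) (k : R)
  (HU : domain n U)
  (Hcone : forall x l, U x -> 0 < l -> U (vscale l x))
  (Hsmooth : smooth_on n U h)
  (Hpos : forall x, U x -> 0 < h x)
  (Hk : 1 < k)
  (Hhom : forall x l, U x -> 0 < l -> h (vscale l x) = Rpower l k * h x)
  (Hlevel : forall x, U x -> h x = 1 -> forall v, nonzero_vec n v ->
              dh n h x v = 0 -> gU n h x v v > 0) :
  (forall c x v w, Uc U h k c x ->
     gprime n h c x v w
       = / (h x + c) * gU n h x v w + / (h x + c) ^ 2 * (dh n h x v * dh n h x w)
     /\ gprime n h c x v w
       = / (h x + c) * gcheck n h x v w
         + (h x - c * (k - 1)) / (k * h x) * / (h x + c) ^ 2 * (dh n h x v * dh n h x w))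
  /\ (forall c,
        open_in n (Uc U h k c)
        /\ (forall i j, (i < n)%nat -> (j < n)%nat ->
              smooth_on n (Uc U h k c) (fun x => - hess (fun y => ln (h y + c)) x i j))
        /\ (forall x v w, Uc U h k c x -> gprime n h c x v w = gprime n h c x w v)
        /\ (forall x v, Uc U h k c x -> nonzero_vec n v -> gprime n h c x v v > 0))
  /\ (forall c c', c * c' > 0 ->
        exists l, 0 < l
          /\ (forall x, Uc U h k c x -> Uc U h k c' (vscale l x))
          /\ (forall y, Uc U h k c' y -> exists x, Uc U h k c x /\ y = vscale l x)
          /\ (forall x v w, Uc U h k c x ->
                gprime n h c' (vscale l x) (vscale l v) (vscale l w) = gprime n h c x v w)).
Proof.
  destruct HU as [Hopen _].
  split; [|split].
  - intros c x v w Hx. split; [apply (gprime_eq n U h k) | apply (gprime_gcheck_eq n U h k)]; auto.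
  - intros c. split; [apply (Uc_open n U h k); auto|]. split; [intros; apply (gprime_entries_smooth n U h k); auto|].
    split; intros; [apply (gprime_sym n U h k) | apply (gprime_pos n U h k)]; auto.
  - intros c c' Hcc.
    assert (Hq : 0 < c' / c).
    { replace (c' / c) with (c * c' / (c * c)) by (field; intros ->; lra).
      apply Rdiv_lt_0_compat; nra. }
    set (l := Rpower (c' / c) (/ k)).
    assert (Hl : 0 < l) by apply Rpower_pos.
    assert (HC : Rpower l k = c' / c) by (apply Rpower_root; auto; lra).
    exists l. split; [exact Hl|]. split; [|split].
    + intros x Hx. apply (Uc_vscale U h k) with c; auto.
    + intros y Hy. exists (vscale (/ l) y). split.
      * apply (Uc_vscale U h k) with c'; auto; [lra | apply Rinv_0_lt_compat; auto |].
        rewrite Rpower_inv_l, HC by auto. field. split; intros ->; lra.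
      * apply functional_extensionality; intros j. unfold vscale. field. lra.
    + intros x v w Hx. apply (gprime_vscale n U h k); auto.
Qed.
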